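(* Let $P$ be a set of $n$ points in $\mathbb R$ and let $H$ be the hypergraph induced by $P$ with respect to intervals (vertex set $P$, hyperedges all nonempty sets $I\cap P$ with $I$ an interval). Then $\mathrm{ch}_{um}(H)\le\log_2 n+1$.
   Context: A coloring $C\colon V\to\mathbb Z_{>0}$ of a hypergraph is unique-maximum if in every hyperedge the maximum color is attained by exactly one vertex. The um-choice number $\mathrm{ch}_{um}(H)$ is the minimum $k$ such that for every family $\{L_v\}_{v\in V}$ of sets of positive integers with $|L_v|\ge k$ there is a unique-maximum coloring $C$ with $C(v)\in L_v$ for all $v$. *)

From HB Require Import structures.
From mathcomp Require Import all_boot all_order all_algebra.
Set Implicit Arguments. Unset Strict Implicit. Unset Printing Implicit Defensive.
Import Order.TTheory GRing.Theory Num.Theory.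

Definition is_interval (R : realFieldType) (I : R -> Prop) : Prop :=
  forall x y z : R, I x -> I z -> (x <= y)%R -> (y <= z)%R -> I y.

Definition interval_hyperedge (R : realFieldType) (P : seq R) (e : R -> Prop)
  : Prop :=
  (exists I : R -> Prop, is_interval I /\ forall x, e x <-> (x \in P /\ I x))
  /\ (exists x, e x).

Definition um_coloring (V : Type) (E : (V -> Prop) -> Prop) (C : V -> nat)
  : Prop :=
  forall e, E e ->
    exists u, e u /\ forall w, e w -> w <> u -> C w < C u.

(* "|L| >= k" for a (possibly infinite) set L of naturals. *)
Definition card_ge (L : nat -> Prop) (k : nat) : Prop :=
  exists s : seq nat, uniq s /\ k <= size s /\ forall c, c \in s -> L c.

Definition um_choosable (V : Type) (Vset : V -> Prop)
  (E : (V -> Prop) -> Prop) (k : nat) : Prop :=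
  forall L : V -> nat -> Prop,
    (forall v, Vset v -> (forall c, L v c -> 0 < c) /\ card_ge (L v) k) ->
    exists C : V -> nat,
      (forall v, Vset v -> L v (C v)) /\ um_coloring E C.

From HB Require Import structures.
From mathcomp Require Import all_boot all_order all_algebra zify.
From Stdlib Require Import ClassicalEpsilon IndefiniteDescription.

Import Order.TTheory.

(* Sort the points, so that hyperedges become ranges of consecutive indices.
   With lists of size at least k and n < 2^k points, the weights 2^-|L_i|
   sum to less than 1.  Let m be the largest color in any list.  Deleting m
   from every list at most doubles the weights of the lists containing m and
   leaves the others unchanged; this still leaves room to pick a vertex v with
   m in its list such that both sides of v keep total weight below 1.  Color v
   with m and recurse on both sides: every range through v then has v as its
   unique maximum, since all other colors are taken from lists without m. *)

(* [2^k * 2^-|s|], except that truncated subtraction makes it 1 when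
   [k < size s]; this only overestimates. *)
Definition weight (k : nat) (s : seq nat) : nat := 2 ^ (k - size s).

Definition potential (k : nat) (l : nat -> seq nat) (a b : nat) : nat :=
  \sum_(a <= i < b) weight k (l i).

Definition um_path (C : nat -> nat) (a b : nat) : Prop :=
  forall c d, a <= c -> c <= d -> d < b ->
    exists2 u, c <= u <= d & forall w, c <= w <= d -> w != u -> C w < C u.

Lemma leq_sum_subrange (F : nat -> nat) {a x y b : nat} :
  a <= x -> x <= y -> y <= b ->
  \sum_(x <= i < y) F i <= \sum_(a <= i < b) F i.
Proof.
move=> ax xy yb; rewrite (big_cat_nat ax (leq_trans xy yb)) (big_cat_nat xy yb) /=.
lia.
Qed.

Lemma weight_rem k m s : weight k (rem m s) <= (weight k s).*2.
Proof.
rewrite /weight -mul2n -expnS leq_pexp2l //.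
have [ms|/rem_id->] := boolP (m \in s); last exact: leqnSn.
(* [set] identifies two occurrences of [size s] that lia sees as distinct. *)
by rewrite size_rem //; set n := size s; lia.
Qed.

Lemma potential_lt_nonempty {k l a b i} :
  potential k l a b < 2 ^ k -> a <= i < b -> l i != [::].
Proof.
move=> pot_lt /andP[ai ib]; apply: contraTneq pot_lt => li0; rewrite -leqNgt /potential.
apply: leq_trans _ (leq_sum_subrange (weight k \o l) ai (leqnSn i) ib).
by rewrite big_nat1 /= /weight li0 subn0.
Qed.

Section BalancedSplit.

Variables (w w' : nat -> nat) (S : pred nat) (a b N : nat).
Hypothesis w'_off : forall i, a <= i < b -> ~~ S i -> w' i = w i.
Hypothesis w'_le : forall i, a <= i < b -> w' i <= (w i).*2.
Hypothesis sum_w_lt : \sum_(a <= i < b) w i < N.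

Local Notation W x y := (\sum_(x <= i < y) w i).
Local Notation W' x y := (\sum_(x <= i < y) w' i).

Lemma sum_w'_le {x y : nat} : a <= x -> y <= b -> W' x y <= (W x y).*2.
Proof.
move=> ax yb; rewrite -mul2n big_distrr !big_seq /=.
by apply: leq_sum => i; rewrite mem_index_iota mul2n => ?; apply: w'_le; lia.
Qed.

Lemma sum_w'_off {x y : nat} :
  a <= x -> y <= b -> (forall i, x <= i < y -> ~~ S i) -> W' x y = W x y.
Proof.
by move=> ax yb offS; apply: eq_big_nat => i ?; apply: w'_off; [lia | apply: offS].
Qed.

Lemma balanced_split :
  (exists2 i, a <= i < b & S i) ->
  exists v, [/\ a <= v < b, S v, W' a v < N & W' v.+1 b < N].
Proof.
move=> [i0 /andP[ai0 i0b] Si0].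
have exS : exists i, [&& a <= i, i < b & S i] by exists i0; rewrite ai0 i0b.
case: (ex_minnP exS) => j /and3P[aj jb Sj] j_min.
have exL : exists i, [&& a <= i, i < b, S i & W' a i < N].
  exists j; rewrite aj jb Sj /= sum_w'_off ?(ltnW jb) //.
    exact: leq_ltn_trans (leq_sum_subrange _ (leqnn a) aj (ltnW jb)) sum_w_lt.
  move=> i /andP[ai ij]; apply/negP => Si.
  by have := j_min i; rewrite ai Si (ltn_trans ij jb) => /(_ isT); lia.
have ubL i : [&& a <= i, i < b, S i & W' a i < N] -> i <= b.
  by case/and4P => _ /ltnW.
case: (ex_maxnP exL ubL) => v /and4P[av vb Sv leftN] v_max.
exists v; split=> //; first by rewrite av.
have [/hasP[u0 u0vb Su0] | /hasPn noS] := boolP (has S (index_iota v.+1 b)); last first.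
  have off_vb i : v.+1 <= i < b -> ~~ S i.
    by move=> vib; apply: noS; rewrite mem_index_iota.
  rewrite (sum_w'_off (leqW av) (leqnn b) off_vb).
  exact: leq_ltn_trans (leq_sum_subrange _ (leqW av) vb (leqnn b)) sum_w_lt.
have exR : exists u, [&& v < u, u < b & S u].
  by exists u0; move: u0vb; rewrite mem_index_iota Su0 andbT.
case: (ex_minnP exR) => u /and3P[vu ub Su] u_min.
have off_vu i : v.+1 <= i < u -> ~~ S i.
  move=> /andP[vi iu]; apply/negP => Si.
  by have := u_min i; rewrite vi Si (ltn_trans iu ub) => /(_ isT); lia.
have avS : a <= v.+1 := leqW av.
have N_le : N <= W' a u.
  rewrite leqNgt; apply/negP => lt_au.
  by have := v_max u; rewrite (leq_trans avS vu) ub Su lt_au => /(_ isT); lia.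
(* The weights right of u and left of
   v.+1 are at most doubled and those strictly between v and u are not, so
   N + W' v.+1 b <= W' a u + W' v.+1 b <= 2 W a b < 2 N. *)
have ub' : u <= b := ltnW ub.
have mid : W' v.+1 u = W v.+1 u := sum_w'_off avS ub' off_vu.
have lft : W' a v.+1 <= (W a v.+1).*2 := sum_w'_le (leqnn a) vb.
have rgt : W' u b <= (W u b).*2 := sum_w'_le (leq_trans avS vu) (leqnn b).
move: N_le sum_w_lt; rewrite (big_cat_nat avS vu) (big_cat_nat avS vb) /=.
by rewrite !(big_cat_nat vu ub') /=; lia.
Qed.

End BalancedSplit.

Lemma exists_max_color {l : nat -> seq nat} {a b i0 : nat} :
  a <= i0 < b -> l i0 != [::] ->
  exists m, (exists2 i, a <= i < b & m \in l i) /\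
            (forall i c, a <= i < b -> c \in l i -> c <= m).
Proof.
move=> i0ab; case Ei0: (l i0) => [//|c0 s] _.
pose colors := flatten [seq l i | i <- index_iota a b].
have in_colors i c : a <= i < b -> c \in l i -> c \in colors.
  by move=> iab ci; apply/flatten_mapP; exists i; rewrite ?mem_index_iota.
have ex_col : exists c, c \in colors by exists c0; apply: (in_colors i0); rewrite ?Ei0 ?mem_head.
have ub_col c : c \in colors -> c <= \max_(c <- colors) c by move=> ?; exact: leq_bigmax_seq.
case: (ex_maxnP ex_col ub_col) => m /flatten_mapP[i]; rewrite mem_index_iota => iab mi m_max.
by exists m; split=> [|j c jab cj]; [exists i | apply/m_max/(in_colors j)].
Qed.

Lemma um_path_empty C a b : b <= a -> um_path C a b.
Proof. by move=> ba c d ac cd db; lia. Qed.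

Lemma eq_um_path {C C' : nat -> nat} {a b : nat} :
  (forall i, a <= i < b -> C i = C' i) -> um_path C a b -> um_path C' a b.
Proof.
move=> eqC umC c d ac cd db; have [u cud u_max] := umC c d ac cd db.
exists u => // x cxd xu; rewrite -!eqC; [exact: u_max | lia | lia].
Qed.

Lemma um_path_join {C : nat -> nat} {a v b : nat} :
  a <= v < b -> um_path C a v -> um_path C v.+1 b ->
  (forall i, a <= i < b -> i != v -> C i < C v) -> um_path C a b.
Proof.
move=> /andP[av vb] umL umR v_max c d ac cd db.
have [cv|vc] := leqP c v; last exact: umR.
have [vd|dv] := leqP v d; last exact: umL.
by exists v => [|x cxd xv]; [rewrite cv vd | apply: v_max => //; lia].
Qed.

Lemma um_path_list_coloring k (l : nat -> seq nat) a b :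
  (forall i, a <= i < b -> uniq (l i)) -> potential k l a b < 2 ^ k ->
  exists2 C, (forall i, a <= i < b -> C i \in l i) & um_path C a b.
Proof.
move: {2}(b - a).+1 (ltnSn (b - a)) => n; elim: n a b l => [//|n IH] a b l.
move=> lt_ba uniq_l pot_lt; have [ba|ab] := leqP b a.
  by exists id => [i|]; [lia | exact: um_path_empty].
have aab : a <= a < b by rewrite leqnn.
have [m [m_in m_max]] := exists_max_color aab (potential_lt_nonempty pot_lt aab).
pose l' i := rem m (l i).
have [v [vab m_v left right]] :
  exists v, [/\ a <= v < b, m \in l v, potential k l' a v < 2 ^ k &
                potential k l' v.+1 b < 2 ^ k].
  apply: (balanced_split (weight k \o l) (weight k \o l') (fun i => m \in l i)) => // i iab.
  - by rewrite /= /l' => /rem_id ->.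
  - exact: weight_rem.
have uniq_l' i : a <= i < b -> uniq (l' i) by move=> ?; apply/rem_uniq/uniq_l.
have [CL CL_in CL_um] := IH a v l' ltac:(lia) ltac:(move=> i ?; apply: uniq_l'; lia) left.
have [CR CR_in CR_um] := IH v.+1 b l' ltac:(lia) ltac:(move=> i ?; apply: uniq_l'; lia) right.
have l'_lt i c : a <= i < b -> c \in l' i -> c < m.
  move=> iab; rewrite mem_rem_uniq ?uniq_l // inE => /andP[cm ci].
  by rewrite ltn_neqAle cm (m_max i).
pose C i := if i == v then m else if i < v then CL i else CR i.
have C_in' i : a <= i < b -> i != v -> C i \in l' i.
  move=> iab /negPf iv; rewrite /C iv; case: ltnP => [ivlt|vi].
  - by apply: CL_in; lia.
  - by apply: CR_in; move/negbT: iv; lia.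
exists C => [i iab|].
  by have [->|iv] := eqVneq i v; [rewrite /C eqxx | exact/mem_rem/C_in'].
apply: (um_path_join vab).
- by apply: eq_um_path CL_um => i ?; rewrite /C ifN ?ifT //; lia.
- by apply: eq_um_path CR_um => i ?; rewrite /C ifN ?ifN //; lia.
- by move=> i iab iv; rewrite {2}/C eqxx; apply: (l'_lt i) => //; exact: C_in'.
Qed.


Lemma interval_nth_range (R : realFieldType) (q : seq R) (I : R -> Prop) :
  sorted <=%O q -> is_interval I -> (exists2 x, x \in q & I x) ->
  exists c d, [/\ c <= d, d < size q &
    forall i, i < size q -> I (nth 0%R q i) <-> c <= i <= d].
Proof.
move=> q_sorted I_itv [x xq Ix].
pose inI i : bool := excluded_middle_informative (I (nth 0%R q i)).
have inIP i : reflect (I (nth 0%R q i)) (inI i).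
  by rewrite /inI; case: excluded_middle_informative => ? /=; constructor.
have exI : exists i, (i < size q) && inI i.
  by exists (index x q); rewrite index_mem xq; apply/inIP; rewrite nth_index.
have ubI i : (i < size q) && inI i -> i <= size q by case/andP => /ltnW.
case: (ex_minnP exI) => c /andP[cq /inIP Ic] c_min.
case: (ex_maxnP exI ubI) => d /andP[dq /inIP Id] d_max.
have nth_le i j : i <= j -> j < size q -> (nth 0%R q i <= nth 0%R q j)%O.
  by move=> ij jq; apply: le_sorted_leq_nth; rewrite ?inE //; apply: leq_ltn_trans ij jq.
exists c, d; split=> [||i iq]; [by apply: c_min; rewrite dq; apply/inIP | by [] |].
split=> [Ii | /andP[ci id]].
- by rewrite c_min ?d_max // iq; apply/inIP.
- by apply: (I_itv _ _ _ Ic Id); apply: nth_le => //; lia.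
Qed.

Lemma interval_um_choosable (R : realFieldType) (P : seq R) k :
  uniq P -> size P < 2 ^ k ->
  um_choosable (fun v => v \in P) (interval_hyperedge P) k.
Proof.
move=> uniq_P ltP L L_ok.
pose good v s := v \in P -> [/\ uniq s, k <= size s & forall c, c \in s -> L v c].
have [sel sel_ok] : exists sel : R -> seq nat, forall v, good v (sel v).
  apply: functional_choice => v.
  have [vP|vNP] := boolP (v \in P); last by exists [::]; rewrite /good (negPf vNP).
  by have [_ [s [us [ks sL]]]] := L_ok v vP; exists s.
pose q := sort <=%O P.
have q_sorted : sorted <=%O q by apply: sort_sorted; exact: le_total.
have mem_q x : (x \in q) = (x \in P) by rewrite mem_sort.
have size_q : size q = size P by rewrite size_sort.
have uniq_q : uniq q by rewrite sort_uniq.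
have nth_qP i : i < size P -> nth 0%R q i \in P by rewrite -mem_q -size_q; apply: mem_nth.
have index_qP y : y \in P -> index y q < size P by rewrite -size_q index_mem mem_q.
pose l i := sel (nth 0%R q i).
have [C' C'_in C'_um] : exists2 C', (forall i, 0 <= i < size P -> C' i \in l i) &
                                    um_path C' 0 (size P).
  apply: (um_path_list_coloring k) => [i /nth_qP/sel_ok[] //|].
  rewrite /potential (eq_big_nat _ _ (F2 := fun=> 1)) ?sum_nat_const_nat ?subn0 ?muln1 //.
  by move=> i /= /nth_qP/sel_ok[_ ks _]; rewrite /weight (eqP ks) expn0.
exists (fun x => C' (index x q)); split=> [v vP|e [[I [I_itv eE]] [x ex]]].
  have [_ _] := sel_ok v vP; apply.
  by move: (C'_in _ (index_qP v vP)); rewrite /l nth_index ?mem_q.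
have [xP Ix] := (eE x).1 ex.
have [c [d [cd dP range]]] :
  exists c d, [/\ c <= d, d < size P &
    forall i, i < size P -> I (nth 0%R q i) <-> c <= i <= d].
  by rewrite -size_q; apply: interval_nth_range => //; exists x; rewrite ?mem_q.
have [u cud u_max] := C'_um c d (leq0n c) cd dP.
have uP : u < size P by apply: leq_ltn_trans dP; case/andP: cud.
exists (nth 0%R q u); split=> [|y ey yu].
  by apply/eE; split; [exact: nth_qP | apply/range].
have [yP Iy] := (eE y).1 ey; have yq := index_qP y yP.
rewrite index_uniq ?size_q //; apply: u_max.
  by apply/range; rewrite ?nth_index ?mem_q.
by apply: contra_notN yu => /eqP <-; rewrite nth_index ?mem_q.
Qed.

Theorem corollary3p5 (R : realFieldType) (P : seq R) (hP : uniq P) :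
  exists k : nat, k <= trunc_log 2 (size P) + 1 /\
    um_choosable (fun v => v \in P) (interval_hyperedge P) k.
Proof.
exists (trunc_log 2 (size P) + 1); split=> //.
by apply: interval_um_choosable; rewrite ?addn1 ?trunc_log_ltn.
Qed.
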